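(* Let $(R,\mathfrak{m})$ be a commutative Artinian local ring with identity, $\mathfrak{m}\neq0$ and $\mathfrak{m}^2=0$, and let $n\ge7$ be an integer. If $n$ is odd, then $\{3,4,5,\dots,n-4\}\cup\{n-2,n\}\subseteq L(x^n)$. If $n$ is even, then $\{2,3,4,5,\dots,n-4\}\cup\{n-2,n\}\subseteq L(x^n)$.
   Context: A nonunit polynomial in $R[x]$ is irreducible if in any factorization into two polynomials one factor is a unit of $R[x]$. A positive integer $k$ is a length of $f$ if $f$ is a product of $k$ irreducible polynomials of $R[x]$; $L(f)$ denotes the set of lengths of $f$. *)

From HB Require Import structures.
From mathcomp Require Import all_boot all_order all_algebra.
Set Implicit Arguments. Unset Strict Implicit. Unset Printing Implicit Defensive.
Import GRing.Theory.
Local Open Scope ring_scope.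

Definition is_ideal (R : comNzRingType) (I : R -> Prop) : Prop :=
  [/\ I 0, (forall a b, I a -> I b -> I (a + b)) & (forall r a, I a -> I (r * a))].

Definition artinian (R : comNzRingType) : Prop :=
  forall I : nat -> R -> Prop,
    (forall k, is_ideal (I k)) ->
    (forall k x, I k.+1 x -> I k x) ->
    exists N, forall k, (N <= k)%N -> forall x, I k x <-> I N x.

(* Local ring: the non-units form an ideal (which is then the unique maximal
   ideal m). *)
Definition local_ring (R : comUnitRingType) : Prop :=
  is_ideal (fun x : R => x \notin GRing.unit).

Definition poly_is_unit (R : comNzRingType) (f : {poly R}) : Prop :=
  exists g : {poly R}, f * g = 1.

Definition poly_irreducible (R : comNzRingType) (f : {poly R}) : Prop :=
  ~ poly_is_unit f /\
  forall g h : {poly R}, f = g * h -> poly_is_unit g \/ poly_is_unit h.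

Definition is_length (R : comNzRingType) (f : {poly R}) (k : nat) : Prop :=
  (0 < k)%N /\
  exists s : seq {poly R},
    [/\ size s = k, (forall g, g \in s -> poly_irreducible g) &
        f = \prod_(g <- s) g].

(* Since m^2 = 0, a polynomial whose constant term is a unit and whose other
   coefficients lie in m is a unit of R[x].  Comparing the lowest and the
   highest unit coefficients in a factorization f = g h (in effect, reducing
   modulo m) shows that if f = X^k + q with k > 0 and q in m[x], the
   unit coefficients of g and h sit in single degrees i and j with i + j = k;
   when i, j > 0 the constant term of f lies in m^2 = 0, so f is irreducible
   as soon as q(0) <> 0.  Taking a in m \ {0},
     X^(2k)   = (X^k + a) (X^k - a),
     X^(2k+2) = (X^2 + a) (X^k + a) (X^k - a - a X^(k-2))
   are products of 2 and of 3 such irreducibles, and padding with factors X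
   yields every length l with 2 <= l <= n - 4 (the second identity serving
   when n - l is odd), as well as n - 2 and n. *)

From HB Require Import structures.
From mathcomp Require Import all_boot all_order all_algebra.
From mathcomp Require Import ring zify.
Set Implicit Arguments.
Unset Strict Implicit.
Unset Printing Implicit Defensive.
Import GRing.Theory.
Local Open Scope ring_scope.

Lemma is_length_irreducible (R : comNzRingType) (g : {poly R}) :
  poly_irreducible g -> is_length g 1.
Proof.
move=> g_irr; split=> //; exists [:: g]; split; rewrite ?big_seq1 //.
by move=> h /[!inE] /eqP->.
Qed.

Lemma is_length_mul_irreducible (R : comNzRingType) (g f : {poly R}) l :
  poly_irreducible g -> is_length f l -> is_length (g * f) l.+1.
Proof.
move=> g_irr [_ [s [size_s irr_s ->]]]; split=> //; exists (g :: s); split.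
- by rewrite /= size_s.
- by move=> h; rewrite inE => /orP[/eqP->|/irr_s].
- by rewrite big_cons.
Qed.

Section LocalRingSquareZero.

Variable R : comUnitRingType.
Hypothesis R_local : local_ring R.
Hypothesis nonunit_mul0 :
  forall a b : R, a \notin GRing.unit -> b \notin GRing.unit -> a * b = 0.

Lemma nonunit0 : (0 : R) \notin GRing.unit.
Proof. by case: R_local. Qed.

Lemma nonunit_mulr (a b : R) : a \notin GRing.unit -> a * b \notin GRing.unit.
Proof. by case: R_local => _ _ idealM Ha; rewrite mulrC; apply: idealM. Qed.

Lemma nonunit_mull (a b : R) : b \notin GRing.unit -> a * b \notin GRing.unit.
Proof. by rewrite mulrC; apply: nonunit_mulr. Qed.

Lemma nonunit_sum (I : Type) (r : seq I) (P : pred I) (F : I -> R) :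
  (forall i, P i -> F i \notin GRing.unit) ->
  \sum_(i <- r | P i) F i \notin GRing.unit.
Proof.
by case: R_local => ideal0 idealD _; apply: (big_ind (fun x => x \notin GRing.unit)).
Qed.

Lemma unitrD_nonunit (u x : R) :
  u \is a GRing.unit -> x \notin GRing.unit -> u + x \is a GRing.unit.
Proof.
case: R_local => _ idealD idealM Hu Hx; apply: contraT => Hux.
by have := idealD _ _ Hux (idealM (-1) x Hx); rewrite mulN1r addrK Hu.
Qed.

Lemma coefM_unit (g h : {poly R}) i j :
  g`_i \is a GRing.unit -> h`_j \is a GRing.unit ->
  (forall s, (s <= i + j)%N -> s != i ->
     g`_s \notin GRing.unit \/ h`_(i + j - s) \notin GRing.unit) ->
  (g * h)`_(i + j) \is a GRing.unit.
Proof.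
move=> Hgi Hhj Hother; have lt_i : (i < (i + j).+1)%N by lia.
rewrite coefM (bigD1 (Ordinal lt_i)) //= addKn.
apply: unitrD_nonunit; first by rewrite unitrM Hgi Hhj.
apply: nonunit_sum => s Hs.
have s_neq_i : nat_of_ord s != i by apply: contra Hs => /eqP E; apply/eqP/val_inj.
have s_le : (s <= i + j)%N by have := ltn_ord s; lia.
by case: (Hother s s_le s_neq_i); [apply: nonunit_mulr | apply: nonunit_mull].
Qed.

Lemma coefM_unit_min (g h : {poly R}) i j :
  g`_i \is a GRing.unit -> h`_j \is a GRing.unit ->
  (forall s, (s < i)%N -> g`_s \notin GRing.unit) ->
  (forall s, (s < j)%N -> h`_s \notin GRing.unit) ->
  (g * h)`_(i + j) \is a GRing.unit.
Proof.
move=> Hgi Hhj low_g low_h; apply: coefM_unit => // s s_le s_neq_i.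
have [/low_g|s_gt_i|s_eq_i] := ltngtP s i; first by left.
  by right; apply: low_h; lia.
by rewrite s_eq_i eqxx in s_neq_i.
Qed.

Lemma coefM_unit_max (g h : {poly R}) i j :
  g`_i \is a GRing.unit -> h`_j \is a GRing.unit ->
  (forall s, (i < s)%N -> g`_s \notin GRing.unit) ->
  (forall s, (j < s)%N -> h`_s \notin GRing.unit) ->
  (g * h)`_(i + j) \is a GRing.unit.
Proof.
move=> Hgi Hhj high_g high_h; apply: coefM_unit => // s _ s_neq_i.
have [s_lt_i|/high_g|s_eq_i] := ltngtP s i; last 2 first.
- by left.
- by rewrite s_eq_i eqxx in s_neq_i.
by right; apply: high_h; lia.
Qed.

Lemma unit_coef_exists (g h : {poly R}) k :
  (g * h)`_k \is a GRing.unit -> exists s, g`_s \is a GRing.unit.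
Proof.
move=> gh_unit; have [/existsP [s Hs]|/existsPn no_unit] :=
  boolP [exists s : 'I_(size g), g`_s \is a GRing.unit]; first by exists (val s).
suff : (g * h)`_k \notin GRing.unit by rewrite gh_unit.
rewrite coefM; apply: nonunit_sum => s _.
apply: nonunit_mulr; have [lt_s|ge_s] := ltnP s (size g).
  exact: (no_unit (Ordinal lt_s)).
by rewrite nth_default // nonunit0.
Qed.

Lemma unit_coef_le_size (g : {poly R}) s :
  g`_s \is a GRing.unit -> (s <= size g)%N.
Proof.
apply: contraTT; rewrite -ltnNge => /ltnW ge_s.
by rewrite nth_default // nonunit0.
Qed.

Lemma poly_unit_of_coefs (g : {poly R}) :
  g`_0 \is a GRing.unit -> (forall s, (0 < s)%N -> g`_s \notin GRing.unit) ->
  poly_is_unit g.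
Proof.
move=> g0_unit high_g; set c := g`_0; set e := g - c%:P.
have e_nonunit s : e`_s \notin GRing.unit.
  case: s => [|s]; rewrite /e coefB coefC /=; first by rewrite subrr nonunit0.
  by rewrite subr0; apply: high_g.
have ee0 : e * e = 0.
  by apply/polyP => s; rewrite coefM coef0; apply: big1 => t _; apply: nonunit_mul0.
have cc1 : c%:P * (c^-1)%:P = 1 by rewrite -polyCM mulrV.
(* c + e has inverse c^-1 - c^-2 e, because e^2 = 0 *)
exists ((c^-1)%:P - (c^-1)%:P * (c^-1)%:P * e).
have -> : g = c%:P + e by rewrite /e addrC subrK.
have -> : (c%:P + e) * ((c^-1)%:P - (c^-1)%:P * (c^-1)%:P * e) =
   c%:P * (c^-1)%:P + (c^-1)%:P * e - (c%:P * (c^-1)%:P) * (c^-1)%:P * e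
   - (c^-1)%:P * (c^-1)%:P * (e * e) by ring.
by rewrite cc1 ee0 mul1r mulr0 subr0 addrK.
Qed.

Lemma poly_not_unit (f : {poly R}) k :
  (0 < k)%N -> f`_k \is a GRing.unit ->
  (forall s, (s < k)%N -> f`_s \notin GRing.unit) -> ~ poly_is_unit f.
Proof.
move=> k_gt0 fk_unit low_f [g fg1].
have ex_g : exists s, g`_s \is a GRing.unit.
  by apply: (@unit_coef_exists _ f 0); rewrite mulrC fg1 coef1 unitr1.
have [j Hj min_j] := ex_minnP ex_g.
suff : (f * g)`_(k + j) \is a GRing.unit.
  by rewrite fg1 coef1 (_ : (k + j == 0)%N = false) ?unitr0 //; lia.
by apply: coefM_unit_min => // s; apply: contraTN => /min_j; lia.
Qed.

Lemma irreducible_of_coefs (f : {poly R}) k :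
  (0 < k)%N -> f`_k \is a GRing.unit ->
  (forall s, s != k -> f`_s \notin GRing.unit) ->
  (k == 1)%N || (f`_0 != 0) -> poly_irreducible f.
Proof.
move=> k_gt0 fk_unit other_f k1_or_f0; split.
  by apply: (poly_not_unit k_gt0 fk_unit) => s s_lt_k; apply: other_f; lia.
move=> g h fgh.
have ex_g : exists s, g`_s \is a GRing.unit.
  by apply: (unit_coef_exists (h := h) (k := k)); rewrite -fgh.
have ex_h : exists s, h`_s \is a GRing.unit.
  by apply: (unit_coef_exists (h := g) (k := k)); rewrite mulrC -fgh.
have [i Hi min_i] := ex_minnP ex_g.
have [j Hj min_j] := ex_minnP ex_h.
have [i' Hi' max_i] := ex_maxnP ex_g (@unit_coef_le_size g).
have [j' Hj' max_j] := ex_maxnP ex_h (@unit_coef_le_size h).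
have low_g s : (s < i)%N -> g`_s \notin GRing.unit.
  by apply: contraTN => /min_i; lia.
have low_h s : (s < j)%N -> h`_s \notin GRing.unit.
  by apply: contraTN => /min_j; lia.
have high_g s : (i' < s)%N -> g`_s \notin GRing.unit.
  by apply: contraTN => /max_i; lia.
have high_h s : (j' < s)%N -> h`_s \notin GRing.unit.
  by apply: contraTN => /max_j; lia.
have ij_k : (i + j)%N = k.
  apply/eqP; apply: contraTT (coefM_unit_min Hi Hj low_g low_h) => ij_neq_k.
  by rewrite -fgh other_f.
have ij'_k : (i' + j')%N = k.
  apply/eqP; apply: contraTT (coefM_unit_max Hi' Hj' high_g high_h) => ij_neq_k.
  by rewrite -fgh other_f.
have [i'_i j'_j] : i' = i /\ j' = j.
  by have := max_i _ Hi; have := min_i _ Hi'; have := max_j _ Hj; have := min_j _ Hj'; lia.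
have [i0|i_gt0] := posnP i.
  left; apply: poly_unit_of_coefs; first by move: Hi; rewrite i0.
  by move=> s s_gt0; apply: high_g; lia.
have [j0|j_gt0] := posnP j.
  right; apply: poly_unit_of_coefs; first by move: Hj; rewrite j0.
  by move=> s s_gt0; apply: high_h; lia.
case/orP: k1_or_f0 => [/eqP k1|]; first lia.
by rewrite fgh coef0M nonunit_mul0 ?eqxx //; [apply: low_g | apply: low_h].
Qed.

Lemma nonunitN (x : R) : x \notin GRing.unit -> - x \notin GRing.unit.
Proof. by move=> /(nonunit_mulr (-1)); rewrite mulrN1. Qed.

Lemma nonunit_coefC (a : R) s : a \notin GRing.unit -> (a%:P)`_s \notin GRing.unit.
Proof. by rewrite coefC; case: (s == 0)%N => // _; apply: nonunit0. Qed.

Lemma X_irreducible : poly_irreducible ('X : {poly R}).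
Proof.
apply: (@irreducible_of_coefs _ 1) => //; first by rewrite coefX unitr1.
by move=> s s_neq1; rewrite coefX (negbTE s_neq1) nonunit0.
Qed.

Lemma Xn_add_irreducible (q : {poly R}) k :
  (0 < k)%N -> (forall s, q`_s \notin GRing.unit) -> q`_0 != 0 ->
  poly_irreducible ('X^k + q).
Proof.
move=> k_gt0 q_nonunit q0_neq0; apply: (irreducible_of_coefs k_gt0).
- by rewrite coefD coefXn eqxx unitrD_nonunit ?unitr1.
- by move=> s s_neq_k; rewrite coefD coefXn (negbTE s_neq_k) add0r.
- by rewrite coefD coefXn (_ : (0 == k)%N = false) ?add0r ?q0_neq0 ?orbT //; lia.
Qed.

Lemma is_length_mulXn (f : {poly R}) m l :
  is_length f l -> is_length ('X^m * f) (m + l).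
Proof.
elim: m => [|m IHm] f_len; first by rewrite expr0 mul1r.
by rewrite exprS -mulrA addSn; apply: is_length_mul_irreducible X_irreducible (IHm _).
Qed.

Variable a : R.
Hypothesis a_nonunit : a \notin GRing.unit.
Hypothesis a_neq0 : a != 0.

Lemma polyC_sqr0 : a%:P * a%:P = 0 :> {poly R}.
Proof. by rewrite -polyCM nonunit_mul0. Qed.

Lemma is_length2_X2k k : (0 < k)%N -> is_length ('X^(2 * k) : {poly R}) 2.
Proof.
move=> k_gt0.
have -> : 'X^(2 * k) = ('X^k + a%:P) * ('X^k - a%:P) :> {poly R}.
  have -> : ('X^k + a%:P) * ('X^k - a%:P) = 'X^k * 'X^k - a%:P * a%:P :> {poly R}
    by ring.
  by rewrite polyC_sqr0 subr0 -exprD mul2n addnn.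
apply: is_length_mul_irreducible (is_length_irreducible _).
  by apply: Xn_add_irreducible; rewrite ?coefC // => s; apply: nonunit_coefC.
rewrite -polyCN; apply: Xn_add_irreducible; rewrite ?coefC ?oppr_eq0 // => s.
by rewrite nonunit_coefC ?nonunitN.
Qed.

Lemma is_length3_X2k2 k : (3 <= k)%N -> is_length ('X^(2 * k + 2) : {poly R}) 3.
Proof.
move=> k_ge3; set Y : {poly R} := 'X^(k - 2); set A : {poly R} := a%:P.
have XkE : 'X^k = Y * 'X^2 by rewrite -exprD subnK //; lia.
have -> : 'X^(2 * k + 2) = ('X^2 + A) * (('X^k + A) * ('X^k - A * (1 + Y))).
  rewrite XkE; have -> : ('X^2 + A) * ((Y * 'X^2 + A) * (Y * 'X^2 - A * (1 + Y))) =
    Y * Y * 'X^2 * 'X^2 * 'X^2 +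
    A * A * (- (1 + Y) * 'X^2 - Y * 'X^2 * Y - A * (1 + Y)) by ring.
  by rewrite polyC_sqr0 mul0r addr0 -!exprD; congr (_ ^+ _); lia.
apply: is_length_mul_irreducible; last apply: is_length_mul_irreducible;
  last apply: is_length_irreducible.
- by apply: Xn_add_irreducible; rewrite ?coefC // => s; apply: nonunit_coefC.
- apply: Xn_add_irreducible; rewrite ?coefC //; first lia.
  by move=> s; apply: nonunit_coefC.
apply: Xn_add_irreducible; first lia.
  by move=> s; rewrite coefN coefCM nonunitN ?nonunit_mulr.
rewrite coefN coefCM coefD coef1 coefXn (_ : (0 == k - 2)%N = false); last lia.
by rewrite addr0 mulr1 oppr_eq0.
Qed.

Lemma is_length_Xn_pad2 n k :
  (0 < k)%N -> (2 * k <= n)%N -> is_length ('X^n : {poly R}) (n - 2 * k + 2).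
Proof.
move=> k_gt0 le_2k_n; have -> : 'X^n = 'X^(n - 2 * k) * 'X^(2 * k) :> {poly R}.
  by rewrite -exprD subnK.
exact: is_length_mulXn (is_length2_X2k k_gt0).
Qed.

Lemma is_length_Xn_pad3 n k :
  (3 <= k)%N -> (2 * k + 2 <= n)%N -> is_length ('X^n : {poly R}) (n - 2 * k + 1).
Proof.
move=> k_ge3 le_n; have -> : 'X^n = 'X^(n - (2 * k + 2)) * 'X^(2 * k + 2) :> {poly R}.
  by rewrite -exprD subnK.
rewrite (_ : n - 2 * k + 1 = n - (2 * k + 2) + 3)%N; last lia.
exact: is_length_mulXn (is_length3_X2k2 k_ge3).
Qed.

Lemma is_length_Xn n l :
  (2 <= l <= n)%N -> ~~ odd (n - l) || (3 <= l <= n - 5)%N ->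
  is_length ('X^n : {poly R}) l.
Proof.
move=> /andP[l_ge2 l_le_n] even_or_mid; have := odd_double_half (n - l).
rewrite -muln2; case: (boolP (odd (n - l))) even_or_mid => [odd_nl|even_nl] /= mid nl_split.
  rewrite (_ : l = n - 2 * ((n - l)./2).+1 + 1)%N; last lia.
  by apply: is_length_Xn_pad3; lia.
rewrite (_ : l = n - 2 * ((n - l)./2).+1 + 2)%N; last lia.
by apply: is_length_Xn_pad2; lia.
Qed.

End LocalRingSquareZero.

Theorem lemma4p13 (R : comUnitRingType) (n : nat) :
  artinian R -> local_ring R ->
  (exists a : R, a \notin GRing.unit /\ a != 0) ->
  (forall a b : R, a \notin GRing.unit -> b \notin GRing.unit -> a * b = 0) ->
  (7 <= n)%N ->
  (odd n ->
     (forall k, (3 <= k <= n - 4)%N -> is_length ('X^n : {poly R}) k) /\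
     is_length ('X^n : {poly R}) (n - 2) /\ is_length ('X^n : {poly R}) n) /\
  (~~ odd n ->
     (forall k, (2 <= k <= n - 4)%N -> is_length ('X^n : {poly R}) k) /\
     is_length ('X^n : {poly R}) (n - 2) /\ is_length ('X^n : {poly R}) n).
Proof.
move=> _ R_local [a [a_nonunit a_neq0]] nonunit_mul0 n_ge7.
have len_Xn := is_length_Xn R_local nonunit_mul0 a_nonunit a_neq0 (n := n).
by split=> n_parity; (split; [move=> k /andP[k_ge k_le] | split]); apply: len_Xn; lia.
Qed.
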